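(* Let $R$ be an integral domain with field of fractions $F$, $A$ a unital $R$-algebra, $P$ a right $A$-module, and $N_1\subseteq N_2$ left $A$-modules with inclusion $\iota:N_1\to N_2$. Suppose that $A\otimes_RF$ is semisimple and that $N_2$ and $P\otimes_AN_1$ are free $R$-modules. Then $\mathrm{id}_P\otimes\iota:P\otimes_AN_1\to P\otimes_AN_2$ is injective. *)

From HB Require Import structures.
From mathcomp Require Import all_boot all_order all_algebra.
Set Implicit Arguments. Unset Strict Implicit. Unset Printing Implicit Defensive.
Import Order.TTheory GRing.Theory Num.Theory.
Local Open Scope ring_scope.

(* Right multiplication on a right A-module, modelled as a left A^c-module. *)
Definition rmul (A : pzRingType) (P : lmodType A^c) (p : P) (a : A) : P :=
  @GRing.scale (A^c) P a p.

Definition balanced (A : pzRingType) (P : lmodType A^c) (N : lmodType A)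
  (U : zmodType) (b : P -> N -> U) : Prop :=
  [/\ (forall p p' n, b (p + p') n = b p n + b p' n),
      (forall p n n', b p (n + n') = b p n + b p n') &
      (forall p a n, b (rmul p a) n = b p (a *: n))].

(* (T, t) is a tensor product P (x)_A N, characterised by its universal
   property among abelian groups. *)
Definition is_tensorA (A : pzRingType) (P : lmodType A^c) (N : lmodType A)
  (T : zmodType) (t : P -> N -> T) : Prop :=
  [/\ balanced t,
      (forall (U : zmodType) (g : P -> N -> U), balanced g ->
         exists h : T -> U, {morph h : x y / x + y} /\
                            forall p n, h (t p n) = g p n) &
      (forall (U : zmodType) (h1 h2 : T -> U),
         {morph h1 : x y / x + y} -> {morph h2 : x y / x + y} ->
         (forall p n, h1 (t p n) = h2 (t p n)) -> h1 =1 h2)].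

Definition free_wrt (R : pzRingType) (M : zmodType) (s : R -> M -> M) : Prop :=
  exists (I : eqType) (e : I -> M),
    (forall x : M, exists (l : seq I) (c : I -> R),
        x = \sum_(i <- l) s (c i) (e i)) /\
    (forall (l : seq I) (c : I -> R), uniq l ->
        \sum_(i <- l) s (c i) (e i) = 0 -> forall i, i \in l -> c i = 0).

(* R-bilinear maps A x F -> U, where A is an R-algebra via phi and F is the
   fraction field of R. *)
Definition R_bilinear (R : idomainType) (A : pzRingType) (phi : R -> A)
  (U : zmodType) (b : A -> {fraction R} -> U) : Prop :=
  [/\ (forall a a' f, b (a + a') f = b a f + b a' f),
      (forall a f f', b a (f + f') = b a f + b a f') &
      (forall r a f, b (phi r * a) f = b a (tofrac r * f))].

(* (B, t) is the ring A (x)_R F: the tensor product (universal among abelian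
   groups for R-bilinear maps), with the ring structure
   (a (x) f)(a' (x) f') = aa' (x) ff', 1 = 1 (x) 1. *)
Definition is_tensor_frac_ring (R : idomainType) (A : pzRingType) (phi : R -> A)
  (B : pzRingType) (t : A -> {fraction R} -> B) : Prop :=
  [/\ R_bilinear phi t,
      (forall (U : zmodType) (g : A -> {fraction R} -> U), R_bilinear phi g ->
         exists h : B -> U, {morph h : x y / x + y} /\
                            forall a f, h (t a f) = g a f),
      (forall (U : zmodType) (h1 h2 : B -> U),
         {morph h1 : x y / x + y} -> {morph h2 : x y / x + y} ->
         (forall a f, h1 (t a f) = h2 (t a f)) -> h1 =1 h2),
      (forall a a' f f', t a f * t a' f' = t (a * a') (f * f')) &
      t 1 1 = 1].

Definition left_ideal (B : pzRingType) (L : B -> Prop) : Prop :=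
  [/\ L 0, (forall x y, L x -> L y -> L (x + y)) &
      (forall a x, L x -> L (a * x))].

Definition semisimple_ring (B : pzRingType) : Prop :=
  forall L : B -> Prop, left_ideal L ->
    exists L' : B -> Prop, [/\ left_ideal L',
      (forall x, L x -> L' x -> x = 0) &
      (forall x, exists y z, [/\ L y, L' z & x = y + z])].

From HB Require Import structures.
From mathcomp Require Import all_boot all_order all_algebra.
From mathcomp Require Import ring boolp classical_sets functions.
Set Implicit Arguments. Unset Strict Implicit. Unset Printing Implicit Defensive.
Import GRing.Theory.
Local Open Scope ring_scope.
Local Open Scope classical_set_scope.
Local Open Scope quotient_scope.

(* Let F be the fraction field of R and D := Hom_R(P, F), a left A-module via
   (a d)(p) = d(p a).  As R is central in A, D is a module over B = A (x)_R F.
   Baer's criterion holds for D: an A-linear map psi from a left ideal L of A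
   to D is b |-> b (psi(a0) / s0), where a0 / s0 is the L-component of 1 in a
   splitting B = LB (+) L' given by semisimplicity.  Hence D is an injective
   A-module.  Now let z in P (x)_A N1 be killed by id (x) iota.  As P (x)_A N1 is
   R-free, z = 0 as soon as lam z = 0 for every R-linear lam into R.  The form
   (p, n) |-> lam (p (x) n) is an A-linear map N1 -> D; it extends along iota to
   N2, so it factors through P (x)_A N2, where z becomes 0. *)

Lemma morphD0 (U V : zmodType) (f : U -> V) : {morph f : x y / x + y} -> f 0 = 0.
Proof. by move=> fD; apply: (@addrI _ (f 0)); rewrite -fD !addr0. Qed.

Lemma morphDN (U V : zmodType) (f : U -> V) :
  {morph f : x y / x + y} -> {morph f : x / - x}.
Proof. by move=> fD x; apply: (@addrI _ (f x)); rewrite -fD !subrr (morphD0 fD). Qed.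

Lemma morphD_inj (U V : zmodType) (f : U -> V) : {morph f : x y / x + y} ->
  (forall x, f x = 0 -> x = 0) -> injective f.
Proof.
move=> fD f0 x y fxy; apply/eqP; rewrite -subr_eq0; apply/eqP/f0.
by rewrite fD (morphDN fD) fxy subrr.
Qed.

Section FractionRepresentation.
Variable R : idomainType.

Lemma tofrac_neq0 (d : R) : d != 0 -> tofrac d != 0 :> {fraction R}.
Proof. by rewrite tofrac_eq0. Qed.

Lemma fraction_piE (x : {ratio R}) :
  \pi_{fraction R} x = tofrac \n_x / tofrac \d_x.
Proof.
have d0 := tofrac_neq0 (denom_ratioP x).
apply: (mulIf d0); rewrite mulfVK //.
unlock tofrac; rewrite -[_ * _]/(FracField.mul _ _) !piE.
apply/eqmodP; rewrite /= FracField.equivfE /FracField.mulf.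
by rewrite !numden_Ratio ?mulf_neq0 ?denom_ratioP ?oner_neq0 // !mulr1 mulrC.
Qed.

Lemma fraction_numden (f : {fraction R}) :
  f = tofrac \n_(repr f) / tofrac \d_(repr f).
Proof. by rewrite -fraction_piE reprK. Qed.

Lemma tofrac_div_eq (n d n' d' : R) : d != 0 -> d' != 0 ->
  tofrac n / tofrac d = tofrac n' / tofrac d' :> {fraction R} -> n * d' = n' * d.
Proof.
move=> d0 d'0 e; apply/eqP; rewrite -tofrac_eq !tofracM.
by rewrite -eqr_div ?tofrac_neq0 // e.
Qed.

End FractionRepresentation.

Section TensorFraction.
Variables (R : idomainType) (A : pzRingType) (phi : {rmorphism R -> A}).
Variables (B : pzRingType) (tB : A -> {fraction R} -> B).
Hypothesis tB_tensor : is_tensor_frac_ring phi tB.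

Lemma tensor_frac_addl f : {morph tB^~ f : a a' / a + a'}.
Proof. by move=> a a'; case: tB_tensor => [[->]]. Qed.
Lemma tensor_frac_rscale r a f : tB (phi r * a) f = tB a (tofrac r * f).
Proof. by case: tB_tensor => [[_ _ ->]]. Qed.
Lemma tensor_fracM a a' f f' : tB a f * tB a' f' = tB (a * a') (f * f').
Proof. by case: tB_tensor. Qed.
Lemma tensor_frac0l f : tB 0 f = 0.
Proof. exact: morphD0 (tensor_frac_addl f). Qed.
Lemma tensor_fracNl a f : tB (- a) f = - tB a f.
Proof. exact: morphDN (tensor_frac_addl f) a. Qed.

Lemma tensor_frac_cancel x y a : x != 0 ->
  tB (phi x * a) (tofrac (x * y))^-1 = tB a (tofrac y)^-1.
Proof. by move=> x0; rewrite tensor_frac_rscale tofracM invfM mulVKf ?tofrac_neq0. Qed.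

End TensorFraction.

(* The localization of A at phi(R \ 0), a quotient of A * R; it is isomorphic
   to A (x)_R F, which shows that every element of A (x)_R F is a fraction
   a (x) 1/s and that a (x) 1 = 0 only for R-torsion a. *)
Section Localization.
Variables (R : idomainType) (A : pzRingType) (phi : {rmorphism R -> A}).

Definition rscale (r : R) (a : A) := phi r * a.

Lemma rscaleA r r' a : rscale r (rscale r' a) = rscale (r * r') a.
Proof. by rewrite /rscale rmorphM mulrA. Qed.
Lemma rscaleDr r : {morph rscale r : a b / a + b}.
Proof. by move=> a b; rewrite /rscale mulrDr. Qed.
Lemma rscaleDl a : {morph rscale^~ a : r r' / r + r'}.
Proof. by move=> r r'; rewrite /rscale rmorphD mulrDl. Qed.
Lemma rscaleNr r a : rscale r (- a) = - rscale r a.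
Proof. by rewrite /rscale mulrN. Qed.
Lemma rscaler0 r : rscale r 0 = 0. Proof. by rewrite /rscale mulr0. Qed.
Lemma rscale1r a : rscale 1 a = a. Proof. by rewrite /rscale rmorph1 mul1r. Qed.

(* Pairs [(a, s)] stand for [a / s]; a zero denominator is read as [1]. *)
Definition den (s : R) := if s == 0 then 1 else s.
Lemma den_neq0 s : den s != 0.
Proof. by rewrite /den; have [_|] := eqVneq s 0; rewrite ?oner_neq0. Qed.
Lemma den_id s : s != 0 -> den s = s.
Proof. by rewrite /den => /negbTE ->. Qed.
Lemma denM s t : den (den s * den t) = den s * den t.
Proof. by rewrite den_id // mulf_neq0 ?den_neq0. Qed.

Definition loc_rel (p q : A * R) : Prop :=
  exists2 u, u != 0 & rscale (u * den q.2) p.1 = rscale (u * den p.2) q.1.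
Definition loc_eqv (p q : A * R) : bool := `[< loc_rel p q >].

Lemma loc_eqv_refl : reflexive loc_eqv.
Proof. by move=> p; apply/asboolP; exists 1; rewrite ?oner_neq0. Qed.
Lemma loc_eqv_sym : symmetric loc_eqv.
Proof. by move=> p q; apply/asboolP/asboolP => -[u u0 e]; exists u. Qed.
Lemma loc_eqv_trans : transitive loc_eqv.
Proof.
move=> [a2 s2] [a1 s1] [a3 s3] /asboolP[u u0 /= e1] /asboolP[v v0 /= e2].
apply/asboolP; exists (u * v * den s2); first by rewrite !mulf_neq0 ?den_neq0.
have -> : rscale (u * v * den s2 * den s3) a1 =
          rscale (v * den s3) (rscale (u * den s2) a1).
  by rewrite rscaleA; congr rscale; ring.
rewrite e1 rscaleA.
have -> : v * den s3 * (u * den s1) = u * den s1 * (v * den s3) by ring.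
rewrite -rscaleA e2 rscaleA; congr rscale; ring.
Qed.

Canonical loc_equiv := EquivRel loc_eqv loc_eqv_refl loc_eqv_sym loc_eqv_trans.

Definition loc := {eq_quot loc_eqv}.
HB.instance Definition _ : EqQuotient _ loc_eqv loc := EqQuotient.on loc.
HB.instance Definition _ := Choice.on loc.

Lemma loc_piP p q : \pi_loc p = \pi_loc q <-> loc_rel p q.
Proof. by split=> [/eqmodP/asboolP // | h]; apply/eqmodP/asboolP. Qed.

Lemma loc_repr p : loc_rel (repr (\pi_loc p)) p.
Proof. by apply/loc_piP; rewrite reprK. Qed.

Definition loc_addp (p q : A * R) : A * R :=
  (rscale (den q.2) p.1 + rscale (den p.2) q.1, den p.2 * den q.2).

Lemma loc_addpC p q : loc_addp p q = loc_addp q p.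
Proof. by rewrite /loc_addp addrC mulrC. Qed.

Lemma loc_addp_compatl p p' q : loc_rel p p' -> loc_rel (loc_addp p q) (loc_addp p' q).
Proof.
case: p p' q => [a s] [a' s'] [b t] [u u0 /= e]; exists u => //=.
rewrite !denM !rscaleDr !rscaleA; congr (_ + _); last by congr rscale; ring.
have -> : u * (den s' * den t) * den t = den t * den t * (u * den s') by ring.
rewrite -rscaleA e rscaleA; congr rscale; ring.
Qed.

Lemma loc_addp_compat p p' q q' :
  loc_rel p p' -> loc_rel q q' -> loc_rel (loc_addp p q) (loc_addp p' q').
Proof.
move=> pp' qq'; apply/asboolP; apply: (@loc_eqv_trans (loc_addp p' q)).
  exact/asboolP/loc_addp_compatl.
by rewrite loc_addpC (loc_addpC p'); apply/asboolP/loc_addp_compatl.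
Qed.

Definition loc_add (x y : loc) : loc := locked (\pi_loc (loc_addp (repr x) (repr y))).
Definition loc_opp (x : loc) : loc := locked (\pi_loc (- (repr x).1, (repr x).2)).

Lemma loc_addE p q : loc_add (\pi_loc p) (\pi_loc q) = \pi_loc (loc_addp p q).
Proof. by rewrite /loc_add -lock; apply/loc_piP/loc_addp_compat; apply: loc_repr. Qed.

Lemma loc_oppE a s : loc_opp (\pi_loc (a, s)) = \pi_loc (- a, s).
Proof.
rewrite /loc_opp -lock; apply/loc_piP; have [u u0 /= e] := loc_repr (a, s).
by exists u => //=; rewrite !rscaleNr e.
Qed.

Lemma loc_addA : associative loc_add.
Proof.
elim/quotW=> [[a s]]; elim/quotW=> [[b t]]; elim/quotW=> [[c w]].
rewrite !loc_addE; apply/loc_piP; exists 1; rewrite ?oner_neq0 //=.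
rewrite !denM [den (_ * (_ * _))]den_id ?mulf_neq0 ?den_neq0 // !rscaleDr !rscaleA -!addrA.
by congr (_ + _); [|congr (_ + _)]; congr rscale; ring.
Qed.

Lemma loc_addC : commutative loc_add.
Proof. by elim/quotW=> p; elim/quotW=> q; rewrite !loc_addE loc_addpC. Qed.

Lemma loc_add0 : left_id (\pi_loc (0, 1)) loc_add.
Proof.
elim/quotW=> [[a s]]; rewrite loc_addE; apply/loc_piP; exists 1; rewrite ?oner_neq0 //=.
by rewrite rscaler0 add0r (den_id (oner_neq0 R)) !mul1r rscale1r (den_id (den_neq0 s)).
Qed.

Lemma loc_addN : left_inverse (\pi_loc (0, 1)) loc_opp loc_add.
Proof.
elim/quotW=> [[a s]]; rewrite loc_oppE loc_addE; apply/loc_piP.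
by exists 1; rewrite ?oner_neq0 //= rscaleNr addNr !rscaler0.
Qed.

HB.instance Definition _ := GRing.isZmodule.Build loc loc_addA loc_addC loc_add0 loc_addN.

Lemma loc_pi_add p q : \pi_loc p + \pi_loc q = \pi_loc (loc_addp p q) :> loc.
Proof. exact: loc_addE. Qed.

Local Notation F := {fraction R}.

Definition loc_of (a : A) (f : F) : loc :=
  \pi_loc (rscale \n_(repr f) a, \d_(repr f)).

Lemma loc_ofE a f n d : d != 0 -> f = tofrac n / tofrac d ->
  loc_of a f = \pi_loc (rscale n a, d).
Proof.
move=> d0 fE; apply/loc_piP; exists 1; rewrite ?oner_neq0 //=.
have := tofrac_div_eq (denom_ratioP _) d0 (etrans (esym (fraction_numden f)) fE).
rewrite !den_id ?denom_ratioP // !rscaleA !mul1r => e.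
by congr rscale; rewrite mulrC e mulrC.
Qed.

Lemma loc_of_bilinear : R_bilinear phi loc_of.
Proof.
have frac (f : F) : exists n d, d != 0 /\ f = tofrac n / tofrac d.
  by exists \n_(repr f), \d_(repr f); rewrite -fraction_numden denom_ratioP.
split.
- move=> a a' f; have [n [d [d0 fE]]] := frac f.
  rewrite !(loc_ofE _ d0 fE) loc_pi_add; apply/loc_piP; exists 1; rewrite ?oner_neq0 //=.
  by rewrite !denM !den_id // !rscaleDr !rscaleA; congr (_ + _); congr rscale; ring.
- move=> a f f'; have [n [d [d0 fE]]] := frac f; have [n' [d' [d'0 f'E]]] := frac f'.
  have dd'0 : d * d' != 0 by rewrite mulf_neq0.
  rewrite (@loc_ofE _ _ (n * d' + n' * d) (d * d')) //; last first.
    by rewrite fE f'E addf_div ?tofrac_neq0 // tofracD !tofracM.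
  rewrite (loc_ofE _ d0 fE) (loc_ofE _ d'0 f'E) loc_pi_add.
  apply/loc_piP; exists 1; rewrite ?oner_neq0 //=.
  rewrite !denM !den_id // !rscaleDl !rscaleDr !rscaleA.
  by congr (_ + _); congr rscale; ring.
- move=> r a f; have [n [d [d0 fE]]] := frac f.
  rewrite (@loc_ofE a _ (r * n) d) //; last by rewrite tofracM -mulrA -fE.
  by rewrite (loc_ofE _ d0 fE) rscaleA mulrC.
Qed.

Variables (B : pzRingType) (tB : A -> F -> B).
Hypothesis tB_tensor : is_tensor_frac_ring phi tB.

Local Notation tensor_frac_addl := (tensor_frac_addl tB_tensor).
Local Notation tensor_frac_rscale := (tensor_frac_rscale tB_tensor).
Local Notation tensor_frac_cancel := (tensor_frac_cancel tB_tensor).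
Local Notation tensor_fracM := (tensor_fracM tB_tensor).

Definition loc_to_tensor (x : loc) : B :=
  tB (repr x).1 (tofrac (den (repr x).2))^-1.

Lemma loc_to_tensorE a s :
  loc_to_tensor (\pi_loc (a, s)) = tB a (tofrac (den s))^-1.
Proof.
rewrite /loc_to_tensor; have [u u0] := loc_repr (a, s); case: (repr _) => a' s' /= e.
rewrite -(@tensor_frac_cancel (u * den s)) ?mulf_neq0 ?den_neq0 //.
by rewrite -/(rscale _ a') e mulrAC tensor_frac_cancel // mulf_neq0 ?den_neq0.
Qed.

Lemma loc_to_tensor_add : {morph loc_to_tensor : x y / x + y}.
Proof.
elim/quotW=> [[a s]]; elim/quotW=> [[b t]]; rewrite loc_pi_add !loc_to_tensorE /= denM.
rewrite tensor_frac_addl tensor_frac_cancel ?den_neq0 //.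
by rewrite mulrC tensor_frac_cancel ?den_neq0.
Qed.

Lemma loc_to_tensor_of a f : loc_to_tensor (loc_of a f) = tB a f.
Proof.
rewrite loc_to_tensorE den_id ?denom_ratioP // tensor_frac_rscale.
by rewrite [in RHS](fraction_numden f).
Qed.

Lemma tensor_frac_fraction (beta : B) :
  exists a s, s != 0 /\ beta = tB a (tofrac s)^-1.
Proof.
case: tB_tensor => _ univ uniq _ _; have [h [hD hE]] := univ _ _ loc_of_bilinear.
have <- : loc_to_tensor (h beta) = beta.
  apply: (uniq B (loc_to_tensor \o h) id) => // [x y|a f] /=.
    by rewrite hD loc_to_tensor_add.
  by rewrite hE loc_to_tensor_of.
elim/quotW: (h beta) => -[a s]; rewrite loc_to_tensorE.
by exists a, (den s); rewrite den_neq0.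
Qed.

Lemma tensor_frac_torsion (c : A) :
  tB c 1 = 0 -> exists2 u, u != 0 & phi u * c = 0.
Proof.
case: tB_tensor => _ univ _ _ _ c0; have [h [hD hE]] := univ _ _ loc_of_bilinear.
have : loc_of c 1 = \pi_loc (0, 1) by rewrite -hE c0 (morphD0 hD).
rewrite (@loc_ofE _ _ 1 1) ?oner_neq0 ?divr1 // => /loc_piP[u u0].
by rewrite /= !den_id ?oner_neq0 // !mulr1 rscale1r rscaler0; exists u.
Qed.

Definition frac_ideal (L : A -> Prop) (beta : B) : Prop :=
  exists b s, [/\ L b, s != 0 & beta = tB b (tofrac s)^-1].

Lemma frac_ideal_left_ideal L : left_ideal L -> left_ideal (frac_ideal L).
Proof.
case=> L0 LD LM; split.
- by exists 0, 1; rewrite oner_neq0 (tensor_frac0l tB_tensor).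
- move=> _ _ [b [s [Lb s0 ->]]] [b' [s' [Lb' s'0 ->]]].
  exists (phi s' * b + phi s * b'), (s * s'); rewrite mulf_neq0 //.
  rewrite tensor_frac_addl [s * s']mulrC !tensor_frac_cancel // mulrC tensor_frac_cancel //.
  by split=> //; apply: LD; apply: LM.
- move=> beta _ [b [s [Lb s0 ->]]].
  have [a [t [t0 ->]]] := tensor_frac_fraction beta.
  exists (a * b), (t * s); rewrite tensor_fracM tofracM invfM mulf_neq0 //.
  by split=> //; apply: LM.
Qed.

End Localization.

Section BaerCriterion.
Variables (A : pzRingType) (D : lmodType A).

Definition baer_criterion : Prop :=
  forall (L : A -> Prop) (psi : A -> D), left_ideal L ->
    (forall x y, L x -> L y -> psi (x + y) = psi x + psi y) ->
    (forall a x, L x -> psi (a * x) = a *: psi x) ->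
    exists d, forall x, L x -> psi x = x *: d.

Variable N : lmodType A.

Definition linear_graph (G : set (N * D)) : Prop :=
  [/\ forall m d d', G (m, d) -> G (m, d') -> d = d',
      forall m d m' d', G (m, d) -> G (m', d') -> G (m + m', d + d') &
      forall a m d, G (m, d) -> G (a *: m, a *: d)].

Definition adjoin (G : set (N * D)) (y : N) (e : D) : set (N * D) :=
  [set x | exists m d a, G (m, d) /\ x = (m + a *: y, d + a *: e)].

Lemma adjoin_sub G y e : G `<=` adjoin G y e.
Proof. by case=> m d Gmd; exists m, d, 0; rewrite !scale0r !addr0. Qed.

Lemma adjoin_new G y e : G (0, 0) -> adjoin G y e (y, e).
Proof. by exists 0, 0, 1; rewrite !scale1r !add0r. Qed.

Lemma linear_graph_adjoin G y : baer_criterion -> linear_graph G -> G (0, 0) ->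
  exists e, linear_graph (adjoin G y e).
Proof.
move=> baer [Gfun GD GZ] G00.
pose L a := exists d, G (a *: y, d).
pose psi a := xget 0 [set d | G (a *: y, d)].
have psiE a d : G (a *: y, d) -> psi a = d.
  by move=> Gad; apply: Gfun (@xgetI _ 0 [set d | G (a *: y, d)] d Gad) Gad.
have LD a b : L a -> L b -> L (a + b).
  by move=> [d Gd] [d' Gd']; exists (d + d'); rewrite scalerDl; apply: GD.
have LM a b : L b -> L (a * b).
  by move=> [d Gd]; exists (a *: d); rewrite -scalerA; apply: GZ.
have psiG a : L a -> G (a *: y, psi a) by move=> [d Gd]; rewrite (psiE _ _ Gd).
have [e psie] : exists e, forall a, L a -> psi a = a *: e.
  apply: baer => [|a b La Lb|a b Lb].
  - by split=> //; exists 0; rewrite scale0r.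
  - by apply: psiE; rewrite scalerDl; apply: GD; apply: psiG.
  - by apply: psiE; rewrite -scalerA; apply: GZ; apply: psiG.
exists e; split.
- move=> _ d1 d2 [m [d [a [Gmd [-> ->]]]]] [m' [d' [a' [Gmd' [e1 ->]]]]].
  have em : m = m' + (a' - a) *: y by rewrite scalerBl addrA -e1 addrK.
  have := GD _ _ _ _ Gmd (GZ (-1) _ _ Gmd').
  rewrite em !scaleN1r addrAC subrr add0r => Gdiff.
  have La : L (a' - a) by exists (d - d').
  move: (psie _ La); rewrite (psiE _ _ Gdiff) scalerBl.
  by move/eqP; rewrite subr_eq => /eqP->; rewrite addrAC subrK addrC.
- move=> _ _ _ _ [m [d [a [Gmd [-> ->]]]]] [m' [d' [a' [Gmd' [-> ->]]]]].
  exists (m + m'), (d + d'), (a + a'); split; first exact: GD.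
  by rewrite !scalerDl (addrACA m) (addrACA d).
- move=> b _ _ [m [d [a [Gmd [-> ->]]]]].
  exists (b *: m), (b *: d), (b * a); split; first exact: GZ.
  by rewrite !scalerDr !scalerA.
Qed.

Variables (N1 : lmodType A) (iota : {linear N1 -> N}) (psi : N1 -> D).
Hypotheses (iota_inj : injective iota)
  (psiD : {morph psi : x y / x + y}) (psiZ : scalable psi).

Definition psi_graph : set (N * D) := [set x | exists n, x = (iota n, psi n)].

Lemma linear_graph_psi : linear_graph psi_graph.
Proof.
split.
- by move=> _ _ _ [n [-> ->]] [n' [/iota_inj <- ->]].
- by move=> _ _ _ _ [n [-> ->]] [n' [-> ->]]; exists (n + n'); rewrite linearD psiD.
- by move=> a _ _ [n [-> ->]]; exists (a *: n); rewrite linearZ psiZ.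
Qed.

(* Taken relative to psi_graph so that the union of the empty chain qualifies. *)
Definition extends_psi (X : set (N * D)) := linear_graph (psi_graph `|` X).

Lemma extends_psi_bigcup (C : set (set (N * D))) :
  C `<=` extends_psi -> total_on C subset -> extends_psi (\bigcup_(X in C) X).
Proof.
move=> Cext Ctot; rewrite /extends_psi; set U := psi_graph `|` _.
have common x x' : U x -> U x' ->
    exists2 H, linear_graph H & [/\ H x, H x' & H `<=` U].
  have sub X : C X -> psi_graph `|` X `<=` U.
    by move=> CX z [?|?]; [left|right; exists X].
  case=> [px|[X CX Xx]] [px'|[X' CX' Xx']].
  - by exists psi_graph; [apply: linear_graph_psi | split=> // z; left].
  - by exists (psi_graph `|` X'); [apply: Cext | split; [left|right|apply: sub]].
  - by exists (psi_graph `|` X); [apply: Cext | split; [right|left|apply: sub]].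
  - have [XX'|X'X] := Ctot X X' CX CX'.
      exists (psi_graph `|` X'); first exact: Cext.
      by split; [right; apply: XX' | right | apply: sub].
    exists (psi_graph `|` X); first exact: Cext.
    by split; [right | right; apply: X'X | apply: sub].
split.
- move=> m d d' Ud Ud'; have [H [Hfun _ _] [Hd Hd' _]] := common _ _ Ud Ud'.
  exact: Hfun Hd Hd'.
- move=> m d m' d' Ud Ud'; have [H [_ HD _] [Hd Hd' HU]] := common _ _ Ud Ud'.
  exact/HU/HD.
- move=> a m d Ud; have [H [_ _ HZ] [Hd _ HU]] := common _ _ Ud Ud.
  exact/HU/HZ.
Qed.

Theorem baer_extension : baer_criterion ->
  exists Psi : N -> D,
    [/\ {morph Psi : x y / x + y}, scalable Psi & forall n, Psi (iota n) = psi n].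
Proof.
move=> baer; have [X [extX maxX]] := Zorn_bigcup extends_psi_bigcup.
set G := psi_graph `|` X; have G00 : G (0, 0).
  by left; exists 0; rewrite linear0 (morphD0 psiD).
have total m : exists d, G (m, d).
  apply: contrapT => Gm; have [e adj] := linear_graph_adjoin m baer extX G00.
  apply: (maxX (adjoin G m e)); last first.
    by rewrite /extends_psi setUidr // => z pz; apply: adjoin_sub; left.
  split=> [z Xz|Xadj]; first by apply: adjoin_sub; right.
  by apply: Gm; exists e; right; apply: Xadj (adjoin_new _ _ G00).
case: extX => Gfun GD GZ.
pose Psi m := xget 0 [set d | G (m, d)].
have PsiE m d : G (m, d) -> Psi m = d.
  by move=> Gmd; apply: Gfun (@xgetI _ 0 [set d | G (m, d)] d Gmd) Gmd.
have PsiG m : G (m, Psi m) by have [d Gmd] := total m; rewrite (PsiE _ _ Gmd).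
exists Psi; split.
- by move=> m m'; apply/PsiE/GD; apply: PsiG.
- by move=> a m; apply/PsiE/GZ; apply: PsiG.
- by move=> n; apply: PsiE; left; exists n.
Qed.

End BaerCriterion.

Section DualModule.
Variables (R : idomainType) (A : pzRingType) (phi : {rmorphism R -> A}).
Hypothesis phi_central : forall r a, phi r * a = a * phi r.
Variable P : lmodType A^c.
Local Notation F := {fraction R}.

Lemma rmulA (p : P) a b : rmul (rmul p a) b = rmul p (a * b).
Proof. exact: scalerA. Qed.
Lemma rmulDr (p q : P) a : rmul (p + q) a = rmul p a + rmul q a.
Proof. exact: scalerDr. Qed.
Lemma rmulDl (p : P) a b : rmul p (a + b) = rmul p a + rmul p b.
Proof. exact: scalerDl. Qed.
Lemma rmul1 (p : P) : rmul p 1 = p.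
Proof. exact: scale1r. Qed.

Definition rlinear (d : P -> F) : Prop :=
  {morph d : p q / p + q} /\ forall r p, d (rmul p (phi r)) = tofrac r * d p.

Lemma rlinear_zmod_closed : zmod_closed [pred d | `[< rlinear d >]].
Proof.
split=> [|d e /asboolP[dD dR] /asboolP[eD eR]]; apply/asboolP.
  by split=> [p q|r p]; rewrite /= ?addr0 ?mulr0.
split=> [p q|r p]; rewrite !fctE; first by rewrite dD eD opprD addrACA.
by rewrite dR eR mulrBr.
Qed.

HB.instance Definition _ :=
  GRing.isZmodClosed.Build (P -> F) _ rlinear_zmod_closed.

Definition dual := {d : P -> F | d \in [pred d | `[< rlinear d >]]}.
HB.instance Definition _ := Choice.on dual.
HB.instance Definition _ := SubType.on dual.
HB.instance Definition _ := [SubChoice_isSubZmodule of dual by <:].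

Lemma dual_rlinear (d : dual) : rlinear (val d).
Proof. by have /asboolP := valP d. Qed.

Lemma rlinear_rmul a d : rlinear d -> rlinear (fun p => d (rmul p a)).
Proof.
case=> dD dR; split=> [p q|r p]; first by rewrite rmulDr dD.
by rewrite rmulA phi_central -rmulA dR.
Qed.

Lemma rlinear_fscale (f : F) d : rlinear d -> rlinear (fun p => f * d p).
Proof.
case=> dD dR; split=> [p q|r p]; first by rewrite dD mulrDr.
by rewrite dR mulrCA.
Qed.

Definition dual_act (a : A) (d : dual) : dual :=
  exist _ (fun p => val d (rmul p a)) (asboolT (rlinear_rmul a (dual_rlinear d))).

Lemma dual_actA a b d : dual_act a (dual_act b d) = dual_act (a * b) d.
Proof. by apply/val_inj/funext => p /=; rewrite rmulA. Qed.
Lemma dual_act1 : left_id 1 dual_act.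
Proof. by move=> d; apply/val_inj/funext => p /=; rewrite rmul1. Qed.
Lemma dual_actDr : right_distributive dual_act +%R.
Proof. by move=> a d e; apply/val_inj/funext. Qed.
Lemma dual_actDl d : {morph dual_act^~ d : a b / a + b}.
Proof.
by move=> a b; apply/val_inj/funext => p /=; rewrite fctE rmulDl (dual_rlinear d).1.
Qed.

HB.instance Definition _ :=
  GRing.Zmodule_isLmodule.Build A dual dual_actA dual_act1 dual_actDr dual_actDl.

Lemma dual_scaleE a (d : dual) p : val (a *: d) p = val d (rmul p a).
Proof. by []. Qed.

Definition dual_fscale (f : F) (d : dual) : dual :=
  exist _ (fun p => f * val d p) (asboolT (rlinear_fscale f (dual_rlinear d))).

Lemma dual_torsion_free r (d : dual) : r != 0 -> phi r *: d = 0 -> d = 0.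
Proof.
move=> r0 rd0; apply/val_inj/funext => p; move/(congr1 (fun e => val e p)): rd0.
rewrite dual_scaleE (dual_rlinear d).2 /= => /eqP.
by rewrite mulf_eq0 tofrac_eq0 (negbTE r0) => /eqP.
Qed.

Variables (B : pzRingType) (tB : A -> F -> B).
Hypotheses (tB_tensor : is_tensor_frac_ring phi tB) (B_semisimple : semisimple_ring B).
Local Notation tensor_frac_addl := (tensor_frac_addl tB_tensor).
Local Notation tensor_frac_rscale := (tensor_frac_rscale tB_tensor).
Local Notation tensor_fracM := (tensor_fracM tB_tensor).
Local Notation tensor_fracNl := (tensor_fracNl tB_tensor).

Lemma dual_baer_criterion : baer_criterion dual.
Proof.
move=> L psi L_ideal psiD psiM; have [L0 LD LM] := L_ideal.
have [L' [[_ _ L'M] LB_L' dec]] := B_semisimple (frac_ideal_left_ideal tB_tensor L_ideal).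
have [_ [z [[a0 [s0 [La0 s00 ->]]] L'z e1]]] := dec 1.
have s0_neq0 := tofrac_neq0 s00.
exists (dual_fscale (tofrac s0)^-1 (psi a0)) => b Lb.
have LN x : L x -> L (- x) by move=> Lx; rewrite -mulN1r; apply: LM.
have psiN x : L x -> psi (- x) = - psi x by move=> Lx; rewrite -mulN1r psiM // scaleN1r.
have Lsb : L (phi s0 * b) := LM _ _ Lb.
have Lba0 : L (b * a0) := LM _ _ La0.
pose c := phi s0 * b - b * a0; have Lc : L c := LD _ _ Lsb (LN _ Lba0).
(* c (x) 1/s0 = (b (x) 1) z lies in LB and in L', so c is R-torsion. *)
have tc1 : tB c 1 = 0.
  have tc0 : tB c (tofrac s0)^-1 = 0.
    apply: LB_L'; first by exists c, s0.
    have -> : tB c (tofrac s0)^-1 = tB b 1 * z.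
      have -> : z = 1 - tB a0 (tofrac s0)^-1 by rewrite e1 addrC addKr.
      rewrite mulrBr mulr1 tensor_fracM mul1r tensor_frac_addl tensor_frac_rscale.
      by rewrite mulfV // tensor_fracNl.
    exact: L'M.
  have := tensor_fracM c 1 (tofrac s0)^-1 (tofrac s0).
  by rewrite tc0 mul0r mulr1 mulVf.
have [u u0 uc0] := tensor_frac_torsion tB_tensor tc1.
have psi0 : psi 0 = 0 by apply: (@addrI _ (psi 0)); rewrite -psiD // !addr0.
have : psi c = 0 by apply: (dual_torsion_free u0); rewrite -psiM // uc0.
rewrite (psiD _ _ Lsb (LN _ Lba0)) (psiN _ Lba0) !psiM // => /eqP.
rewrite subr_eq0 => /eqP e.
apply/val_inj/funext => p; move/(congr1 (fun d => val d p)): e.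
by rewrite !dual_scaleE (dual_rlinear _).2 /= => <-; rewrite mulKf.
Qed.

Variables (N1 N2 : lmodType A) (iota : {linear N1 -> N2}).
Hypothesis iota_inj : injective iota.

Lemma balanced_form_extension (g : P -> N1 -> {fraction R}) :
  balanced g -> (forall r p n, g (rmul p (phi r)) n = tofrac r * g p n) ->
  exists2 g2 : P -> N2 -> {fraction R}, balanced g2 & forall p n, g2 p (iota n) = g p n.
Proof.
move=> [gDl gDr gbal] gR.
have g_rlinear n : rlinear (g^~ n) by split=> [p q|r p]; [apply: gDl | apply: gR].
pose psi n : dual := exist _ (g^~ n) (asboolT (g_rlinear n)).
have psiD : {morph psi : n n' / n + n'}.
  by move=> n n'; apply/val_inj/funext => p; apply: gDr.
have psiZ : scalable psi.
  by move=> a n; apply/val_inj/funext => p; rewrite [RHS]dual_scaleE /= gbal.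
have [Psi [PsiD PsiZ Psi_iota]] :=
  baer_extension iota_inj psiD psiZ dual_baer_criterion.
exists (fun p m => val (Psi m) p); last by move=> p n; rewrite Psi_iota.
split=> [p p' m|p m m'|p a m]; first exact: (dual_rlinear _).1.
  by rewrite PsiD.
by rewrite PsiZ.
Qed.

End DualModule.

Section Coordinates.
Variables (R : pzRingType) (T : lmodType R) (I : eqType) (e : I -> T).
Hypothesis span : forall x, exists (l : seq I) (c : I -> R), x = \sum_(i <- l) c i *: e i.
Hypothesis indep : forall (l : seq I) (c : I -> R), uniq l ->
  \sum_(i <- l) c i *: e i = 0 -> forall i, i \in l -> c i = 0.

Definition coef (l : seq I) (c : I -> R) k := \sum_(i <- l | i == k) c i.

Lemma coef_notin l c k : k \notin l -> coef l c k = 0.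
Proof.
move=> kl; rewrite /coef big_seq_cond big_pred0 // => i.
by apply/andP => -[il /eqP ik]; rewrite -ik il in kl.
Qed.

Lemma coef_uniq m c k : uniq m -> coef m c k = if k \in m then c k else 0.
Proof.
elim: m => [|j m IH]; first by rewrite /coef big_nil.
move=> /= /andP[jm um]; rewrite /coef big_cons in_cons.
have [<-|jk] := eqVneq j k; last exact: IH.
by rewrite /= -/(coef m c j) coef_notin // addr0.
Qed.

Lemma sum_pick (m : seq I) i (r : R) : uniq m -> i \in m ->
  \sum_(k <- m) (if i == k then r else 0) *: e k = r *: e i.
Proof.
elim: m => [|j m IH] //= /andP[jm um]; rewrite in_cons big_cons.
have [->|ij] := eqVneq i j.
  move=> _; rewrite big1_seq ?addr0 // => k /andP[_ km].
  by case: eqP => [ik|]; [rewrite ik km in jm | rewrite scale0r].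
by rewrite /= scale0r add0r => /IH ->.
Qed.

Lemma sum_coef l c m : uniq m -> {subset l <= m} ->
  \sum_(i <- l) c i *: e i = \sum_(k <- m) coef l c k *: e k.
Proof.
move=> um; elim: l => [|i l IH] lm.
  by rewrite big_nil big1 // => k _; rewrite /coef big_nil scale0r.
rewrite big_cons IH => [|x xl]; last by apply: lm; rewrite in_cons xl orbT.
rewrite -(sum_pick (c i) um (lm i (mem_head i l))) -big_split /=.
apply: eq_bigr => k _; rewrite /coef big_cons -scalerDl.
by case: eqP => _; rewrite ?add0r.
Qed.

Lemma coef_unique l c l' c' k :
  \sum_(i <- l) c i *: e i = \sum_(i <- l') c' i *: e i -> coef l c k = coef l' c' k.
Proof.
move=> eq_sum; set m := undup (l ++ l'); have um : uniq m := undup_uniq _.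
have lm : {subset l <= m} by move=> x xl; rewrite mem_undup mem_cat xl.
have l'm : {subset l' <= m} by move=> x xl'; rewrite mem_undup mem_cat xl' orbT.
have : \sum_(k <- m) (coef l c k - coef l' c' k) *: e k = 0.
  under eq_bigr do rewrite scalerBl.
  by rewrite sumrB -sum_coef // -sum_coef // eq_sum subrr.
move/(indep um) => coef_eq; have [km|km] := boolP (k \in m).
  by apply/eqP; rewrite -subr_eq0; apply/eqP/coef_eq.
by rewrite !coef_notin //; apply: contra km; [apply: l'm | apply: lm].
Qed.

Lemma span_pair x : exists lc : seq I * (I -> R), x = \sum_(i <- lc.1) lc.2 i *: e i.
Proof. by have [l [c ->]] := span x; exists (l, c). Qed.

Definition coord k x := let lc := projT1 (cid (span_pair x)) in coef lc.1 lc.2 k.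

Lemma coordE x l c k : x = \sum_(i <- l) c i *: e i -> coord k x = coef l c k.
Proof. by rewrite /coord; case: cid => -[l' c'] /= -> ?; apply: coef_unique. Qed.

Lemma coordD k : {morph coord k : x y / x + y}.
Proof.
move=> x y; have [l [c xE]] := span x; have [l' [c' yE]] := span y.
set m := undup (l ++ l'); have um : uniq m := undup_uniq _.
have lm : {subset l <= m} by move=> z zl; rewrite mem_undup mem_cat zl.
have l'm : {subset l' <= m} by move=> z zl'; rewrite mem_undup mem_cat zl' orbT.
rewrite (coordE k xE) (coordE k yE) (@coordE _ m (fun k => coef l c k + coef l' c' k)).
  rewrite coef_uniq //; case: ifPn => // km.
  by rewrite !coef_notin ?addr0 //; apply: contra km; [apply: l'm | apply: lm].
rewrite xE yE (sum_coef _ um lm) (sum_coef _ um l'm) -big_split /=.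
by apply: eq_bigr => i _; rewrite scalerDl.
Qed.

Lemma coordZ k r x : coord k (r *: x) = r * coord k x.
Proof.
have [l [c xE]] := span x; rewrite (coordE k xE) (@coordE _ l (fun i => r * c i)).
  by rewrite /coef mulr_sumr.
by rewrite xE scaler_sumr; apply: eq_bigr => i _; rewrite scalerA.
Qed.

Lemma coord_eq0 x : (forall k, coord k x = 0) -> x = 0.
Proof.
move=> x0; have [l [c xE]] := span x.
rewrite xE (@sum_coef l c (undup l)) ?undup_uniq // => [|z]; last by rewrite mem_undup.
by rewrite big1 // => k _; rewrite -(coordE k xE) x0 scale0r.
Qed.

End Coordinates.

Lemma free_functionals_eq0 (R : pzRingType) (T : lmodType R) (x : T) :
  free_wrt (@GRing.scale R T) ->
  (forall lam : T -> R, {morph lam : u v / u + v} ->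
     (forall r u, lam (r *: u) = r * lam u) -> lam x = 0) ->
  x = 0.
Proof.
case=> I [e [span indep]] x0; apply: (@coord_eq0 _ _ _ _ span indep) => k.
by apply: x0 => [u v|r u]; [apply: coordD | apply: coordZ].
Qed.

Theorem mainTheorem6
  (R : idomainType)
  (A : pzRingType) (phi : {rmorphism R -> A})
  (phi_central : forall r a, phi r * a = a * phi r)
  (P : lmodType A^c)
  (N1 N2 : lmodType A) (iota : {linear N1 -> N2}) (iota_inj : injective iota)
  (B : pzRingType) (tB : A -> {fraction R} -> B)
  (tB_tensor : is_tensor_frac_ring phi tB)
  (B_semisimple : semisimple_ring B)
  (T1 : lmodType R) (t1 : P -> N1 -> T1) (t1_tensor : is_tensorA t1)
  (t1_R : forall r p n, t1 (rmul p (phi r)) n = r *: t1 p n)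
  (T2 : lmodType R) (t2 : P -> N2 -> T2) (t2_tensor : is_tensorA t2)
  (t2_R : forall r p n, t2 (rmul p (phi r)) n = r *: t2 p n)
  (N2_free : free_wrt (fun (r : R) (n : N2) => phi r *: n))
  (T1_free : free_wrt (@GRing.scale R T1)) :
  forall f : T1 -> T2, {morph f : x y / x + y} ->
    (forall p n, f (t1 p n) = t2 p (iota n)) -> injective f.
Proof.
move=> f fD ft; apply: (morphD_inj fD) => z fz0.
apply: free_functionals_eq0 T1_free _ => lam lamD lamZ.
case: t1_tensor => [[t1Dl t1Dr t1bal] _ t1_uniq]; case: t2_tensor => _ t2_univ _.
have [g2 g2_bal g2_iota] : exists2 g2 : P -> N2 -> {fraction R},
    balanced g2 & forall p n, g2 p (iota n) = tofrac (lam (t1 p n)).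
  apply: (balanced_form_extension phi_central tB_tensor B_semisimple iota_inj).
    by split=> [p p' n|p n n'|p a n]; rewrite ?t1Dl ?t1Dr ?t1bal ?lamD ?tofracD.
  by move=> r p n; rewrite t1_R lamZ tofracM.
have [h [hD hE]] := t2_univ _ _ g2_bal.
have : tofrac (lam z) = h (f z).
  apply: (t1_uniq _ (fun x => tofrac (lam x)) (h \o f) _ _ _ z) => [x y|x y|p n] /=.
  - by rewrite lamD tofracD.
  - by rewrite fD hD.
  - by rewrite ft hE g2_iota.
by rewrite fz0 (morphD0 hD) => /eqP; rewrite tofrac_eq0 => /eqP.
Qed.
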